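(* Let $x \in \mathbb{R}^n$ be the input data and let the coordinate index set $\{1,\dots,n\}$ be partitioned into $L$ nonempty levels; write $V_l \subseteq \mathbb{R}^n$ for the coordinate subspace of level $l$ ($l=1,\dots,L$, level $L$ coarsest, level $1$ finest), so that the $V_l$ are mutually orthogonal and $\mathbb{R}^n=\bigoplus_l V_l$. Let $\Pi_l$ be the orthogonal projection onto $V_l$, and for $v\in\mathbb{R}^n$ write $v_l=\Pi_l v$ and $v_{>l}=\sum_{m>l}\Pi_m v$ (so $v_{>L}=0$). For each $l$ let $P_l:\mathbb{R}^n\to V_l$ be a linear interpolation-prediction operator with $P_l v = P_l(v_{>l})$ for all $v$ (it uses only coordinates of coarser levels), and suppose $\|P_l\|_\infty\le p$ for all $l$, where $\|\cdot\|_\infty$ denotes the operator norm induced by the max-norm, and $p\ge 1$ ($p=1$ for linear interpolation, $p=1.25$ for cubic interpolation). Compression: for $l=L,L-1,\dots,1$, set $y_l = x_l - P_l\hat x_{>l}$, choose a quantized/dequantized value $\hat y_l\in V_l$ with $\|y_l-\hat y_l\|_\infty\le eb$ (where $eb>0$ is the compression error bound), and set $\hat x_l = P_l\hat x_{>l}+\hat y_l$. Progressive retrieval: for each level $l$ let $\tilde y_l\in V_l$ be the value reconstructed from only the loaded bitplanes, and define the information loss $\delta y_l=\hat y_l-\tilde y_l\in V_l$. Reconstruct, for $l=L,\dots,1$, $\tilde x_l = P_l\tilde x_{>l}+\tilde y_l$, and let $\tilde x=\sum_l \tilde x_l$. Then $$\|x-\tilde x\|_\infty \le \sum_{l=0}^{L-1}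 p^{\,l}\,\|\delta y_{l+1}\|_\infty + eb .$$
   Context: This models an interpolation-based progressive lossy compressor: data are split into hierarchical levels (by interpolation stride), each level is predicted by interpolation from already-reconstructed coarser levels, the prediction residual is quantized with pointwise error at most $eb$, and the quantized integers are stored by bitplanes so that a retrieval may load only some bitplanes of each level; $\delta y_l$ is the resulting loss at level $l$ relative to full retrieval. Linear interpolation predicts $y_i=\tfrac12(x_{i-1}+x_{i+1})$ (coefficients with absolute sum $1$), cubic interpolation predicts $y_i=-\tfrac1{16}x_{i-3}+\tfrac9{16}x_{i-1}+\tfrac9{16}x_{i+1}-\tfrac1{16}x_{i+3}$ (absolute sum $1.25$). $\|v\|_\infty$ for a vector is the maximum absolute entry. *)

(* Data live in column vectors 'cV[R]_n; coordinate i is v i 0.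
   Levels are indexed by 'I_L: index l : 'I_L is the paper's level l+1
   (index 0 = finest level 1, index L-1 = coarsest level L). *)
From mathcomp Require Import all_boot all_order all_algebra.
From mathcomp Require Import reals.
Set Implicit Arguments. Unset Strict Implicit. Unset Printing Implicit Defensive.
Import Order.TTheory GRing.Theory Num.Theory.
Local Open Scope ring_scope.

Section Defs.
Variables (R : realType) (n L : nat) (lev : 'I_n -> 'I_L).

Definition mnorm (v : 'cV[R]_n) : R := \big[Num.max/0]_(i < n) `|v i 0|.

Definition inV (l : 'I_L) (v : 'cV[R]_n) : Prop :=
  forall i : 'I_n, lev i != l -> v i 0 = 0.

Definition proj (l : 'I_L) (v : 'cV[R]_n) : 'cV[R]_n :=
  \col_i (if lev i == l then v i 0 else 0).

Definition coarser (l : 'I_L) (v : 'cV[R]_n) : 'cV[R]_n :=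
  \col_i (if (l < lev i)%N then v i 0 else 0).

End Defs.

(* Let e := xhat - xtil be the retrieval error.  Subtracting the two
   reconstruction recursions shows that e obeys the same recursion, driven by
   the losses delta y_l = yhat_l - ytil_l: e_l = P_l e_{>l} + delta y_l.  Since
   P_l amplifies max-norms by at most p, downward induction on the level gives
   |e_i| <= sum_{m >= l} p^(m-l) |delta y_m|_oo for every coordinate i of
   level l, and because p >= 1 this tail sum is largest at the finest level.
   Finally x - xhat has all its level components bounded by eb. *)
From mathcomp Require Import zify.
From mathcomp Require Import all_boot all_order all_algebra.
From mathcomp Require Import reals.
Import Order.TTheory GRing.Theory Num.Theory.
Local Open Scope ring_scope.

Section MaxNorm.
Context {R : realType} {n : nat}.
Implicit Types (u v : 'cV[R]_n) (c : R).

Lemma ler_mnorm v i : `|v i 0| <= mnorm v.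
Proof. by rewrite /mnorm (bigD1 i) //= le_max lexx. Qed.

Lemma mnorm_le v c : 0 <= c -> (forall i, `|v i 0| <= c) -> mnorm v <= c.
Proof.
move=> c_ge0 v_le; rewrite /mnorm; elim/big_ind: _ => // a b.
by rewrite ge_max => -> ->.
Qed.

Lemma mnorm_ge0 v : 0 <= mnorm v.
Proof. by rewrite /mnorm; elim/big_ind: _ => // a b a_ge0 _; rewrite le_max a_ge0. Qed.

Lemma mnormD u v : mnorm (u + v) <= mnorm u + mnorm v.
Proof.
apply: mnorm_le => [|i]; first by rewrite addr_ge0 ?mnorm_ge0.
by rewrite mxE (le_trans (ler_normD _ _)) // lerD ?ler_mnorm.
Qed.

End MaxNorm.

Section Levels.
Context {R : realType} {n L : nat} {lev : 'I_n -> 'I_L}.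
Implicit Types (u v : 'cV[R]_n).

Lemma proj_lev v i : proj lev (lev i) v i 0 = v i 0.
Proof. by rewrite mxE eqxx. Qed.

Lemma projB l u v : proj lev l (u - v) = proj lev l u - proj lev l v.
Proof. by apply/matrixP => i j; rewrite !mxE; case: ifP; rewrite ?subr0. Qed.

Lemma coarserB l u v : coarser lev l (u - v) = coarser lev l u - coarser lev l v.
Proof. by apply/matrixP => i j; rewrite !mxE; case: ifP; rewrite ?subr0. Qed.

Lemma mnorm_le_proj v (c : R) :
  0 <= c -> (forall l, mnorm (proj lev l v) <= c) -> mnorm v <= c.
Proof.
move=> c_ge0 proj_le; apply: mnorm_le => // i.
by rewrite -proj_lev (le_trans (ler_mnorm _ _)).
Qed.

Lemma mnorm_coarser_le (l : 'I_L) v (c : R) :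
  0 <= c -> (forall i, (l < lev i)%N -> `|v i 0| <= c) ->
  mnorm (coarser lev l v) <= c.
Proof.
move=> c_ge0 v_le; apply: mnorm_le => // i; rewrite mxE.
by case: ifP => [/v_le//|_]; rewrite normr0.
Qed.

End Levels.

Section WeightedTail.
Context {R : numDomainType} {L : nat} (p : R) (d : 'I_L -> R).

Definition weighted_tail (k : nat) : R :=
  \sum_(l < L | (k <= l)%N) p ^+ (l - k) * d l.

Lemma weighted_tail0 : weighted_tail 0 = \sum_(l < L) p ^+ l * d l.
Proof. by apply: eq_bigr => l _; rewrite subn0. Qed.

Lemma weighted_tailS (k : 'I_L) : weighted_tail k = d k + p * weighted_tail k.+1.
Proof.
rewrite /weighted_tail (bigD1 k) //= subnn mul1r mulr_sumr; congr (_ + _).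
apply: eq_big => [l|l /andP[le_kl ne_lk]]; first by rewrite ltn_neqAle eq_sym andbC.
by rewrite mulrA -exprS subnSK // ltn_neqAle eq_sym ne_lk.
Qed.

Hypotheses (p_ge1 : 1 <= p) (d_ge0 : forall l, 0 <= d l).

Lemma weighted_tail_ge0 k : 0 <= weighted_tail k.
Proof.
apply: sumr_ge0 => l _; rewrite mulr_ge0 // exprn_ge0 //.
exact: le_trans p_ge1.
Qed.

Lemma weighted_tail_le k k' : (k <= k')%N -> weighted_tail k' <= weighted_tail k.
Proof.
move=> le_kk'; rewrite /weighted_tail [leLHS]big_mkcond [leRHS]big_mkcond /=.
apply: ler_sum => l _; case: ifP => [le_k'l | _].
  rewrite (leq_trans le_kk' le_k'l) ler_wpM2r //.
  by rewrite ler_weXn2l // leq_sub2l.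
by case: ifP => // _; rewrite mulr_ge0 // exprn_ge0 // (le_trans _ p_ge1).
Qed.

End WeightedTail.

Section ErrorPropagation.
Context {R : realType} {n L : nat} {lev : 'I_n -> 'I_L}.
Context {P : 'I_L -> 'M[R]_n} {p : R}.
Hypotheses (p_ge1 : 1 <= p)
  (P_norm : forall l v, mnorm (P l *m v) <= p * mnorm v).

Lemma recursionB {u w : 'cV[R]_n} {y z : 'I_L -> 'cV[R]_n} :
  (forall l, proj lev l u = P l *m coarser lev l u + y l) ->
  (forall l, proj lev l w = P l *m coarser lev l w + z l) ->
  forall l, proj lev l (u - w) = P l *m coarser lev l (u - w) + (y l - z l).
Proof.
move=> u_rec w_rec l.
by rewrite projB u_rec w_rec coarserB mulmxBr opprD addrACA.
Qed.

Context {e : 'cV[R]_n} {r : 'I_L -> 'cV[R]_n}.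
Hypothesis e_rec : forall l, proj lev l e = P l *m coarser lev l e + r l.

Lemma error_propagation i :
  `|e i 0| <= weighted_tail p (fun l => mnorm (r l)) (lev i).
Proof.
have d_ge0 l : 0 <= mnorm (r l) by apply: mnorm_ge0.
have [k] := ubnP (L - lev i); elim: k i => // k IHk i lt_ik.
have e_i : e i 0 = (P (lev i) *m coarser lev (lev i) e) i 0 + r (lev i) i 0.
  by rewrite -(proj_lev (lev:=lev)) e_rec mxE.
rewrite weighted_tailS e_i addrC (le_trans (ler_normD _ _)) // lerD //.
  exact: ler_mnorm.
rewrite (le_trans (ler_mnorm _ i)) // (le_trans (P_norm _ _)) //.
rewrite ler_wpM2l ?(le_trans _ p_ge1) //.
apply: mnorm_coarser_le => [|j lt_ij]; first exact: weighted_tail_ge0.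
rewrite (le_trans (IHk j _)) ?weighted_tail_le //.
by have := ltn_ord (lev j); lia.
Qed.

Lemma mnorm_error_propagation : mnorm e <= \sum_(l < L) p ^+ l * mnorm (r l).
Proof.
have d_ge0 l : 0 <= mnorm (r l) by apply: mnorm_ge0.
rewrite -weighted_tail0; apply: mnorm_le => [|i]; first exact: weighted_tail_ge0.
by rewrite (le_trans (error_propagation i)) ?weighted_tail_le.
Qed.

End ErrorPropagation.

Theorem theorem5p1 (R : realType) (n L : nat) (lev : 'I_n -> 'I_L)
  (lev_surj : forall l : 'I_L, exists i : 'I_n, lev i = l)
  (P : 'I_L -> 'M[R]_n) (p eb : R)
  (hp : 1 <= p) (heb : 0 < eb)
  (P_range : forall (l : 'I_L) (v : 'cV[R]_n), inV lev l (P l *m v))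
  (P_coarse : forall (l : 'I_L) (v : 'cV[R]_n),
      P l *m v = P l *m coarser lev l v)
  (P_norm : forall (l : 'I_L) (v : 'cV[R]_n),
      mnorm (P l *m v) <= p * mnorm v)
  (x xhat xtil : 'cV[R]_n) (yhat ytil : 'I_L -> 'cV[R]_n)
  (yhat_in : forall l, inV lev l (yhat l))
  (ytil_in : forall l, inV lev l (ytil l))
  (* compression: xhat_l = P_l xhat_{>l} + yhat_l,
     with y_l = x_l - P_l xhat_{>l} and |y_l - yhat_l|_oo <= eb *)
  (xhat_def : forall l, proj lev l xhat = P l *m coarser lev l xhat + yhat l)
  (quant : forall l,
      mnorm ((proj lev l x - P l *m coarser lev l xhat) - yhat l) <= eb)
  (* progressive retrieval: xtil_l = P_l xtil_{>l} + ytil_l *)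
  (xtil_def : forall l, proj lev l xtil = P l *m coarser lev l xtil + ytil l) :
  mnorm (x - xtil) <= \sum_(l < L) p ^+ l * mnorm (yhat l - ytil l) + eb.
Proof.
(* The recursions already apply P_l to the coarser part and only coordinate i
   of the level-(lev i) equation is ever read. *)
have retrieval_err : mnorm (xhat - xtil) <=
    \sum_(l < L) p ^+ l * mnorm (yhat l - ytil l).
  exact: (mnorm_error_propagation hp P_norm (recursionB xhat_def xtil_def)).
have compression_err : mnorm (x - xhat) <= eb.
  apply: (mnorm_le_proj (lev := lev)) => [|l]; first exact: ltW.
  by rewrite projB xhat_def opprD addrA.
have -> : x - xtil = (xhat - xtil) + (x - xhat) by rewrite [RHS]addrC addrA subrK.
exact: le_trans (mnormD _ _) (lerD retrieval_err compression_err).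
Qed.
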